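(* Let $\mathcal{V}$ be a variety and let $F,G$ be global operators on $\mathcal{V}$ for admissible and reflexive relations which are monotone and satisfy the homomorphism property. Then the following are equivalent: (i) There is a ternary term $t$ of $\mathcal{V}$ which is Mal'cev modulo $F_{\mathbf{A}}$ and $G_{\mathbf{A}}$ for every algebra $\mathbf{A}\in\mathcal{V}$. (ii) Every $\mathbf{A}\in\mathcal{V}$ has a ternary term which is Mal'cev modulo $F_{\mathbf{A}}$ and $G_{\mathbf{A}}$. (iii) The free algebra $\mathbf{X}$ in $\mathcal{V}$ on $2$ generators has a ternary term which is Mal'cev modulo $F_{\mathbf{X}}$ and $G_{\mathbf{X}}$. (iv) In the free algebra $\mathbf{X}$ in $\mathcal{V}$ freely generated by $x,y$ there is a ternary term $t$ such that, with $S$ the smallest reflexive admissible relation on $\mathbf{X}$ containing $(x,y)$, we have $(x,t(x,y,y))\in F_{\mathbf{X}}(S)$ and $(t(x,x,y),y)\in G_{\mathbf{X}}(S)$. (v) For every $\mathbf{A}\in\mathcal{V}$ and every $R\in\mathrm{Adm}(\mathbf{A})$: $R\circ R\subseteq F_{\mathbf{A}}(R)\circ R\circ G_{\mathbf{A}}(R)$. (vi) In the free algebra $\mathbf{X}$ in $\mathcal{V}$ on $3$ generators, $R\circ R\subseteq F_{\mathbf{X}}(R)\circ R\circ G_{\mathbf{X}}(R)$ for every $R\in\mathrm{Adm}(\mathbf{X})$. (vii) In the free algebra $\mathbf{X}$ in $\mathcal{V}$ freely generated by $x,y,z$, with $S$ the smallest reflexive admissible relation on $\mathbf{X}$ containing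 both $(x,y)$ and $(y,z)$, we have $S\circ S\subseteq F_{\mathbf{X}}(S)\circ S\circ G_{\mathbf{X}}(S)$. (viii) For every $\mathbf{A}\in\mathcal{V}$ and every $R\in\mathrm{Adm}(\mathbf{A})$: $R\subseteq F_{\mathbf{A}}(R)\circ R^-\circ G_{\mathbf{A}}(R)$. (ix) In the free algebra $\mathbf{X}$ in $\mathcal{V}$ on $2$ generators, $R\subseteq F_{\mathbf{X}}(R)\circ R^-\circ G_{\mathbf{X}}(R)$ for every $R\in\mathrm{Adm}(\mathbf{X})$. (x) In the free algebra $\mathbf{X}$ in $\mathcal{V}$ freely generated by $x,y$, with $S$ the smallest reflexive admissible relation on $\mathbf{X}$ containing $(x,y)$, we have $S\subseteq F_{\mathbf{X}}(S)\circ S^-\circ G_{\mathbf{X}}(S)$.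
   Context: For an algebra $\mathbf{A}$, $\mathrm{Adm}(\mathbf{A})$ is the set of reflexive admissible (= compatible, i.e. closed under the basic operations coordinatewise) binary relations on $\mathbf{A}$. Given maps $F,G:\mathrm{Adm}(\mathbf{A})\to\mathrm{Adm}(\mathbf{A})$, a ternary term $t$ is Mal'cev modulo $F$ and $G$ if for all $a,b\in A$ and $R\in\mathrm{Adm}(\mathbf{A})$ with $aRb$: $(a,t(a,b,b))\in F(R)$ and $(t(a,a,b),b)\in G(R)$. A global operator $F$ on $\mathcal{V}$ for admissible and reflexive relations assigns to each $\mathbf{A}\in\mathcal{V}$ a map $F_{\mathbf{A}}:\mathrm{Adm}(\mathbf{A})\to\mathrm{Adm}(\mathbf{A})$. It is monotone if $R\subseteq S$ implies $F_{\mathbf{A}}(R)\subseteq F_{\mathbf{A}}(S)$. It has the homomorphism property if whenever $\mathbf{A},\mathbf{B}\in\mathcal{V}$, $\varphi:\mathbf{B}\to\mathbf{A}$ is a homomorphism and $R\in\mathrm{Adm}(\mathbf{B})$, then $\varphi(F_{\mathbf{B}}(R))\subseteq F_{\mathbf{A}}(\varphi(R))$, where for a relation $T$ on $\mathbf{B}$, $\varphi(T)$ denotes the smallest reflexive compatible relation on $\mathbf{A}$ containing $\{(\varphi(b),\varphi(c)):bTc\}$. Relational composition: $R\circ S=\{(a,c):\exists b\,(aRb\text{ and }bSc)\}$; $R^-$ is the converse of $R$. *)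

From mathcomp Require Import all_boot.
From Stdlib Require Import ClassicalEpsilon.

Set Implicit Arguments.
Unset Strict Implicit.
Unset Printing Implicit Defensive.

Record signature := Signature { sop : Type; sarity : sop -> nat }.

Inductive term (sg : signature) (X : Type) : Type :=
| Var : X -> term sg X
| App : forall o : sop sg, ('I_(sarity o) -> term sg X) -> term sg X.
Arguments Var {sg X} x.
Arguments App {sg X} o ts.

Record algebra (sg : signature) := Algebra {
  carrier :> Type;
  interp : forall o : sop sg, ('I_(sarity o) -> carrier) -> carrier }.
Arguments interp {sg} a o args : rename.

Fixpoint eval (sg : signature) (A : algebra sg) (X : Type) (e : X -> A)
  (t : term sg X) : A :=
  match t with
  | Var x => e x
  | App o ts => interp A o (fun i => eval e (ts i))
  end.

Fixpoint subst (sg : signature) (X Y : Type) (h : X -> term sg Y)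
  (t : term sg X) : term sg Y :=
  match t with
  | Var x => h x
  | App o ts => App o (fun i => subst h (ts i))
  end.

Definition env3 (T : Type) (a b c : T) : 'I_3 -> T :=
  fun i => if val i == 0 then a else if val i == 1 then b else c.

Definition app3 (sg : signature) (A : algebra sg) (t : term sg 'I_3)
  (a b c : A) : A := eval (env3 a b c) t.

(** * Varieties: given by a set of identities (Birkhoff) *)

Definition identities (sg : signature) := term sg nat -> term sg nat -> Prop.

Definition in_variety (sg : signature) (Sigma : identities sg) (A : algebra sg) :=
  forall s t, Sigma s t -> forall e : nat -> A, eval e s = eval e t.

Definition hom (sg : signature) (B A : algebra sg) (phi : B -> A) :=
  forall o (args : 'I_(sarity o) -> B),
    phi (interp B o args) = interp A o (fun i => phi (args i)).

Definition rel_ (T : Type) := T -> T -> Prop.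

Definition rsub (T : Type) (R S : rel_ T) := forall a b, R a b -> S a b.
Definition rcomp (T : Type) (R S : rel_ T) : rel_ T :=
  fun a c => exists b, R a b /\ S b c.
Definition rconv (T : Type) (R : rel_ T) : rel_ T := fun a b => R b a.

Definition compatible (sg : signature) (A : algebra sg) (R : rel_ A) :=
  forall o (a b : 'I_(sarity o) -> A),
    (forall i, R (a i) (b i)) -> R (interp A o a) (interp A o b).

Definition adm (sg : signature) (A : algebra sg) (R : rel_ A) :=
  (forall a, R a a) /\ compatible R.

Definition gen_adm (sg : signature) (A : algebra sg) (P : rel_ A) : rel_ A :=
  fun a b => forall R : rel_ A, adm R -> rsub P R -> R a b.

Definition rimage (S T : Type) (phi : S -> T) (R : rel_ S) : rel_ T :=
  fun a b => exists x y, R x y /\ a = phi x /\ b = phi y.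

Definition global_op (sg : signature) := forall A : algebra sg, rel_ A -> rel_ A.

Definition is_global_op (sg : signature) (Sigma : identities sg) (F : global_op sg) :=
  forall A : algebra sg, in_variety Sigma A ->
    forall R : rel_ A, adm R -> adm (F A R).

Definition monotone_op (sg : signature) (Sigma : identities sg) (F : global_op sg) :=
  forall A : algebra sg, in_variety Sigma A ->
    forall R S : rel_ A, adm R -> adm S -> rsub R S -> rsub (F A R) (F A S).

Definition hom_property (sg : signature) (Sigma : identities sg) (F : global_op sg) :=
  forall (A B : algebra sg), in_variety Sigma A -> in_variety Sigma B ->
    forall phi : B -> A, hom phi ->
    forall R : rel_ B, adm R ->
      rsub (gen_adm (rimage phi (F B R))) (F A (gen_adm (rimage phi R))).

Definition malcev_mod (sg : signature) (A : algebra sg) (F G : rel_ A -> rel_ A)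
  (t : term sg 'I_3) :=
  forall (a b : A) (R : rel_ A), adm R -> R a b ->
    F R a (app3 t a b b) /\ G R (app3 t a a b) b.

Inductive deriv (sg : signature) (Sigma : identities sg) (X : Type) :
    term sg X -> term sg X -> Prop :=
| d_refl t : deriv Sigma t t
| d_sym s t : deriv Sigma s t -> deriv Sigma t s
| d_trans s t u : deriv Sigma s t -> deriv Sigma t u -> deriv Sigma s u
| d_cong o (ss ts : 'I_(sarity o) -> term sg X) :
    (forall i, deriv Sigma (ss i) (ts i)) -> deriv Sigma (App o ss) (App o ts)
| d_ax s t (h : nat -> term sg X) :
    Sigma s t -> deriv Sigma (subst h s) (subst h t).

Section Free.
Variables (sg : signature) (Sigma : identities sg) (X : Type).

(** equivalence classes of terms *)
Definition fcarrier : Type :=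
  {P : term sg X -> Prop | exists t, P = deriv Sigma t}.

Definition fclass (t : term sg X) : fcarrier :=
  exist _ (deriv Sigma t) (ex_intro _ t erefl).

Definition frep (p : fcarrier) : term sg X :=
  proj1_sig (constructive_indefinite_description _ (proj2_sig p)).

Definition free_alg : algebra sg :=
  @Algebra sg fcarrier (fun o args => fclass (App o (fun i => frep (args i)))).

Definition free_gen (x : X) : free_alg := fclass (Var x).

End Free.

Definition Free (sg : signature) (Sigma : identities sg) (n : nat) : algebra sg :=
  @free_alg sg Sigma 'I_n.
Definition gen (sg : signature) (Sigma : identities sg) (n : nat) (i : 'I_n) :
  Free Sigma n := @free_gen sg Sigma 'I_n i.

(** The key condition is (iv): a term witnessing it at the generic pair x S y
    of the free algebra on two generators is Mal'cev modulo F_A and G_A in every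
    algebra A of the variety, because each pair a R b is the image of x S y under
    the homomorphism x |-> a, y |-> b, and monotonicity together with the
    homomorphism property carry F(S) and G(S) into F_A(R) and G_A(R).
    A Mal'cev term t turns a R b R c into a F(R) t(a,b,b) R t(b,b,c) G(R) c, and
    a R b into a F(R) t(a,b,b) R^- t(a,a,b) G(R) b, which gives (v) and (viii).
    Conversely, in a free algebra the admissible relation generated by pairs
    (u_i, v_i) consists of the pairs (r(x, u), r(x, v)) for terms r; so the middle
    pair produced by (x) is already of the form (t(x,x,y), t(x,y,y)), and the one
    produced by (vii) becomes such a pair once z is collapsed onto y (for F) or
    onto y and y onto x (for G). *)

From mathcomp Require Import all_boot.
From Stdlib Require Import FunctionalExtensionality PropExtensionality.
From Stdlib Require Import ProofIrrelevance ClassicalEpsilon.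

Set Implicit Arguments.
Unset Strict Implicit.
Unset Printing Implicit Defensive.

Local Notation o0 := (@Ordinal 3 0 isT).
Local Notation o1 := (@Ordinal 3 1 isT).
Local Notation o2 := (@Ordinal 3 2 isT).

Section Terms.
Variable sg : signature.

Lemma eval_ext (A : algebra sg) (X : Type) (e1 e2 : X -> A) (t : term sg X) :
  e1 =1 e2 -> eval e1 t = eval e2 t.
Proof.
move=> e12; elim: t => [x|o ts IH] /=; first exact: e12.
by congr (interp A o); apply: functional_extensionality.
Qed.

Lemma eval_subst (A : algebra sg) (X Y : Type) (e : Y -> A) (h : X -> term sg Y)
  (t : term sg X) : eval e (subst h t) = eval (fun x => eval e (h x)) t.
Proof.
elim: t => [x|o ts IH] //=.
by congr (interp A o); apply: functional_extensionality.
Qed.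

Lemma hom_eval (A B : algebra sg) (phi : B -> A) (X : Type) (e : X -> B)
  (t : term sg X) : hom phi -> phi (eval e t) = eval (phi \o e) t.
Proof.
move=> hom_phi; elim: t => [x|o ts IH] //=.
by rewrite hom_phi; congr (interp A o); apply: functional_extensionality.
Qed.

Lemma adm_eval (A : algebra sg) (R : rel_ A) (X : Type) (e1 e2 : X -> A)
  (t : term sg X) :
  adm R -> (forall x, R (e1 x) (e2 x)) -> R (eval e1 t) (eval e2 t).
Proof.
move=> [_ compR] e12; elim: t => [x|o ts IH] /=; first exact: e12.
exact: compR.
Qed.

Lemma app3_hom (A B : algebra sg) (phi : B -> A) (t : term sg 'I_3) (a b c : B) :
  hom phi -> phi (app3 t a b c) = app3 t (phi a) (phi b) (phi c).
Proof.
move=> hom_phi; rewrite /app3 hom_eval //.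
by apply: eval_ext => -[[|[|[|m]]] Hi].
Qed.

Lemma app3_adm (A : algebra sg) (R : rel_ A) (t : term sg 'I_3)
  (a1 a2 a3 b1 b2 b3 : A) : adm R ->
  R a1 b1 -> R a2 b2 -> R a3 b3 -> R (app3 t a1 a2 a3) (app3 t b1 b2 b3).
Proof.
move=> admR R1 R2 R3; apply: adm_eval admR _ => i.
by rewrite /env3; case: (val i == 0); case: (val i == 1).
Qed.

Lemma gen_adm_adm (A : algebra sg) (P : rel_ A) : adm (gen_adm P).
Proof.
split; first by move=> a R [reflR _] _; apply: reflR.
by move=> o a b Pab R admR subPR; apply: admR.2 => i; apply: Pab.
Qed.

Lemma gen_adm_min (A : algebra sg) (P R : rel_ A) :
  adm R -> rsub P R -> rsub (gen_adm P) R.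
Proof. by move=> admR subPR a b; apply. Qed.

Lemma gen_adm_gen (A : algebra sg) (P : rel_ A) : rsub P (gen_adm P).
Proof. by move=> a b Pab R _; apply. Qed.

Lemma adm_preimage (A B : algebra sg) (phi : B -> A) (R : rel_ A) :
  hom phi -> adm R -> adm (fun u v => R (phi u) (phi v)).
Proof.
move=> hom_phi [reflR compR]; split=> [a|o a b Rab]; first exact: reflR.
by rewrite !hom_phi; apply: compR.
Qed.

Lemma gen_adm_hom (A B : algebra sg) (phi : B -> A) (P : rel_ B) (R : rel_ A) :
  hom phi -> adm R -> rsub P (fun u v => R (phi u) (phi v)) ->
  rsub (gen_adm P) (fun u v => R (phi u) (phi v)).
Proof. by move=> hom_phi admR; apply: gen_adm_min; apply: adm_preimage. Qed.

Definition term_pairs (A : algebra sg) (Y : Type) (e1 e2 : Y -> A) : rel_ A :=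
  fun u v => exists r : term sg Y, u = eval e1 r /\ v = eval e2 r.

Lemma term_pairs_compatible (A : algebra sg) (Y : Type) (e1 e2 : Y -> A) :
  compatible (term_pairs e1 e2).
Proof.
move=> o a b ab_pairs.
pose rs i := proj1_sig (constructive_indefinite_description _ (ab_pairs i)).
have rsP i := proj2_sig (constructive_indefinite_description _ (ab_pairs i)).
by exists (App o rs); split=> /=; congr (interp A o);
  apply: functional_extensionality => i; case: (rsP i).
Qed.

End Terms.

Section FreeAlgebra.
Variables (sg : signature) (Sigma : identities sg) (X : Type).
Local Notation free := (free_alg Sigma X).
Local Notation fclass := (@fclass sg Sigma X).
Local Notation gens := (@free_gen sg Sigma X).

Lemma fclass_eq (s t : term sg X) : deriv Sigma s t -> fclass s = fclass t.
Proof.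
move=> dst; apply: ProofIrrelevanceTheory.subset_eq_compat.
apply: functional_extensionality => u; apply: propositional_extensionality.
by split=> [dsu|dtu]; [apply: d_trans (d_sym dst) dsu | apply: d_trans dst dtu].
Qed.

Lemma frep_spec (p : free) : proj1_sig p = deriv Sigma (frep p).
Proof. exact: proj2_sig (constructive_indefinite_description _ (proj2_sig p)). Qed.

Lemma fclass_frep (p : free) : fclass (frep p) = p.
Proof.
have := frep_spec p; case: p => P HP /= defP.
exact: ProofIrrelevanceTheory.subset_eq_compat.
Qed.

Lemma frep_deriv (t : term sg X) : deriv Sigma t (frep (fclass t)).
Proof. by rewrite -[deriv Sigma t]/(proj1_sig (fclass t)) frep_spec; apply: d_refl. Qed.

Lemma eval_free_gen (t : term sg X) : eval (A := free) gens t = fclass t.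
Proof.
elim: t => [x|o ts IH] //=; apply: fclass_eq; apply: d_cong => i.
by rewrite IH; apply/d_sym/frep_deriv.
Qed.

Lemma eval_free_gen_frep (p : free) : eval gens (frep p) = p.
Proof. by rewrite eval_free_gen fclass_frep. Qed.

Lemma eval_fclass (Y : Type) (h : Y -> term sg X) (t : term sg Y) :
  eval (A := free) (fclass \o h) t = fclass (subst h t).
Proof.
rewrite -eval_free_gen eval_subst.
by apply: eval_ext => y; rewrite /= eval_free_gen.
Qed.

Lemma in_variety_free : in_variety Sigma free.
Proof.
move=> s t st e.
have -> : e = fclass \o (fun k => frep (e k)).
  by apply: functional_extensionality => k; rewrite /= fclass_frep.
by rewrite !eval_fclass; apply/fclass_eq/d_ax.
Qed.

Lemma deriv_sound (A : algebra sg) (g : X -> A) (s t : term sg X) :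
  in_variety Sigma A -> deriv Sigma s t -> eval g s = eval g t.
Proof.
move=> varA; elim=> {s t} [//|s t _ -> //|s t u _ -> _ -> //| o ss ts _ IH |s t h st].
- by congr (interp A o); apply: functional_extensionality.
- by rewrite !eval_subst; apply: varA.
Qed.

Definition free_lift (A : algebra sg) (g : X -> A) (p : free) : A := eval g (frep p).

Section Lift.
Variables (A : algebra sg) (g : X -> A).
Hypothesis varA : in_variety Sigma A.

Lemma free_lift_fclass (t : term sg X) : free_lift g (fclass t) = eval g t.
Proof. by symmetry; apply/(deriv_sound g varA)/frep_deriv. Qed.

Lemma free_lift_gen (x : X) : free_lift g (gens x) = g x.
Proof. exact: free_lift_fclass. Qed.

Lemma free_lift_hom : hom (free_lift g).
Proof. by move=> o args; rewrite /= free_lift_fclass. Qed.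

End Lift.

Definition free_ext (I : Type) (f : I -> free) (y : X + I) : free :=
  match y with inl x => gens x | inr i => f i end.

(* The pairs (r(x, f1), r(x, f2)) are admissible, reflexivity coming from the
   terms r in the generators x alone. *)
Lemma gen_adm_free (I : Type) (f1 f2 : I -> free) (P : rel_ free) :
  rsub P (fun u v => exists i, u = f1 i /\ v = f2 i) ->
  rsub (gen_adm P) (term_pairs (free_ext f1) (free_ext f2)).
Proof.
move=> subP; apply: gen_adm_min; last first.
  by move=> u v /subP[i [-> ->]]; exists (Var (inr i)).
split; last exact: term_pairs_compatible.
move=> p; exists (subst (fun x => Var (inl x)) (frep p)).
by rewrite !eval_subst /= eval_free_gen_frep.
Qed.

End FreeAlgebra.

Lemma op_hom_gen_adm (sg : signature) (Sigma : identities sg) (F : global_op sg)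
  (mF : monotone_op Sigma F) (pF : hom_property Sigma F) (A B : algebra sg)
  (varA : in_variety Sigma A) (varB : in_variety Sigma B) (phi : B -> A)
  (P : rel_ B) (R : rel_ A) :
  hom phi -> adm R -> rsub P (fun u v => R (phi u) (phi v)) ->
  rsub (F B (gen_adm P)) (fun u v => F A R (phi u) (phi v)).
Proof.
move=> hom_phi admR subP u v Fuv.
have imR : rsub (gen_adm (rimage phi (gen_adm P))) R.
  apply: (gen_adm_min admR) => _ _ [a [b [Pab [-> ->]]]].
  exact: (gen_adm_hom hom_phi admR subP Pab).
apply: (mF A varA _ R (gen_adm_adm _) admR imR).
apply: (pF A B varA varB phi hom_phi _ (gen_adm_adm P)).
by apply: gen_adm_gen; exists u, v.
Qed.

Section MalcevRelations.
Variables (sg : signature) (A : algebra sg) (F G : rel_ A -> rel_ A).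
Variables (t : term sg 'I_3) (malcev_t : malcev_mod F G t).

Lemma malcev_rcomp (R : rel_ A) :
  adm R -> rsub (rcomp R R) (rcomp (F R) (rcomp R (G R))).
Proof.
move=> admR a c [b [Rab Rbc]].
exists (app3 t a b b); split; first exact: (malcev_t admR Rab).1.
exists (app3 t b b c); split; last exact: (malcev_t admR Rbc).2.
by apply: app3_adm => //; apply: admR.1.
Qed.

Lemma malcev_rconv (R : rel_ A) :
  adm R -> rsub R (rcomp (F R) (rcomp (rconv R) (G R))).
Proof.
move=> admR a b Rab.
exists (app3 t a b b); split; first exact: (malcev_t admR Rab).1.
exists (app3 t a a b); split; last exact: (malcev_t admR Rab).2.
by rewrite /rconv; apply: app3_adm => //; apply: admR.1.
Qed.

End MalcevRelations.

Section GenericMalcev.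
Variables (sg : signature) (Sigma : identities sg).
Variables (F G : global_op sg).
Arguments F : clear implicits.
Arguments G : clear implicits.
Hypotheses (mF : monotone_op Sigma F) (mG : monotone_op Sigma G).
Hypotheses (pF : hom_property Sigma F) (pG : hom_property Sigma G).

Local Notation X2 := (Free Sigma 2).
Local Notation X3 := (Free Sigma 3).
Local Notation x2 := (gen Sigma (@Ordinal 2 0 isT)).
Local Notation y2 := (gen Sigma (@Ordinal 2 1 isT)).
Local Notation S2 := (@gen_adm sg X2 (fun a b => a = x2 /\ b = y2)).
Local Notation x3 := (gen Sigma o0).
Local Notation y3 := (gen Sigma o1).
Local Notation z3 := (gen Sigma o2).
Local Notation S3 :=
  (@gen_adm sg X3 (fun a b => (a = x3 /\ b = y3) \/ (a = y3 /\ b = z3))).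

Let varX2 : in_variety Sigma X2 := @in_variety_free sg Sigma 'I_2.
Let varX3 : in_variety Sigma X3 := @in_variety_free sg Sigma 'I_3.

Definition generic_malcev (t : term sg 'I_3) :=
  F X2 S2 x2 (app3 t x2 y2 y2) /\ G X2 S2 (app3 t x2 x2 y2) y2.

Lemma generic_malcev_malcev_mod (t : term sg 'I_3) : generic_malcev t ->
  forall A : algebra sg, in_variety Sigma A -> malcev_mod (F A) (G A) t.
Proof.
move=> [Ft Gt] A varA a b R admR Rab.
pose g (i : 'I_2) := if val i == 0 then a else b.
have hom_g := free_lift_hom g varA.
have [gx gy] : free_lift g x2 = a /\ free_lift g y2 = b by rewrite !free_lift_gen.
have SR : rsub (fun u v => u = x2 /\ v = y2)
                (fun u v => R (free_lift g u) (free_lift g v)).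
  by move=> _ _ [-> ->]; rewrite gx gy.
split.
- have := op_hom_gen_adm mF pF varA varX2 hom_g admR SR Ft.
  by rewrite app3_hom // gx gy.
- have := op_hom_gen_adm mG pG varA varX2 hom_g admR SR Gt.
  by rewrite app3_hom // gx gy.
Qed.

Lemma free2_rconv_generic_malcev :
  rsub S2 (rcomp (F _ S2) (rcomp (rconv S2) (G _ S2))) ->
  exists t, generic_malcev t.
Proof.
move=> S2_rconv.
have [u [Fu [v [Svu Gv]]]] := S2_rconv _ _ (gen_adm_gen (conj erefl erefl)).
have S2_pairs : rsub S2 (term_pairs (free_ext (fun _ : unit => x2))
                                    (free_ext (fun _ : unit => y2))).
  by apply: gen_adm_free => _ _ [-> ->]; exists tt.
have [r [defv defu]] := S2_pairs _ _ Svu.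
pose h (y : 'I_2 + unit) := @Var sg _
  (match y with inl i => if val i == 0 then o0 else o2 | inr _ => o1 end).
exists (subst h r); rewrite /generic_malcev.
suff [-> ->] : app3 (subst h r) x2 y2 y2 = u /\ app3 (subst h r) x2 x2 y2 = v by [].
rewrite defu defv /app3 !eval_subst.
by split; apply: eval_ext => -[[[|[|m]] Hi]|[]] //=; congr (free_gen _ _); apply: val_inj.
Qed.

Lemma op_free3_collapse (H : global_op sg) (g : 'I_3 -> X2) :
  monotone_op Sigma H -> hom_property Sigma H ->
  S2 (g o0) (g o1) -> S2 (g o1) (g o2) ->
  rsub (H X3 S3) (fun u v => H X2 S2 (free_lift g u) (free_lift g v)).
Proof.
move=> mH pH S01 S12.
apply: (op_hom_gen_adm mH pH varX2 varX3 (free_lift_hom g varX2) (gen_adm_adm _)).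
by move=> _ _ [[-> ->]|[-> ->]]; rewrite !free_lift_gen.
Qed.

Lemma free3_rcomp_generic_malcev :
  rsub (rcomp S3 S3) (rcomp (F _ S3) (rcomp S3 (G _ S3))) ->
  exists t, generic_malcev t.
Proof.
move=> S3_rcomp.
have xSySz : rcomp S3 S3 x3 z3.
  by exists y3; split; apply: gen_adm_gen; [left | right].
have [d [Fd [e [Sde Ge]]]] := S3_rcomp _ _ xSySz.
pose f1 (b : bool) := if b then y3 else x3.
pose f2 (b : bool) := if b then z3 else y3.
have S3_pairs : rsub S3 (term_pairs (free_ext f1) (free_ext f2)).
  by apply: gen_adm_free => _ _ [[-> ->]|[-> ->]]; [exists false | exists true].
have [r [defd defe]] := S3_pairs _ _ Sde.
(* Under both collapses x,y,z |-> x,y,y and x,y,z |-> x,x,y, the extra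
   variables [inr false] and [inr true] evaluate like the first and the last. *)
pose h (y : 'I_3 + bool) := @Var sg _
  (match y with inl i => i | inr b => if b then o2 else o0 end).
exists (subst h r); rewrite /generic_malcev /app3 !eval_subst.
have S2refl : forall a, S2 a a := (gen_adm_adm _).1.
have S2xy : S2 x2 y2 by apply: gen_adm_gen.
split.
- have := op_free3_collapse (g := env3 x2 y2 y2) mF pF S2xy (S2refl _) Fd.
  rewrite free_lift_gen // defd (hom_eval _ _ (free_lift_hom _ varX2)).
  by congr (F _ _ _); apply: eval_ext => -[i|[]] /=; rewrite free_lift_gen.
- have := op_free3_collapse (g := env3 x2 x2 y2) mG pG (S2refl _) S2xy Ge.
  rewrite free_lift_gen // defe (hom_eval _ _ (free_lift_hom _ varX2)).
  by congr (G _ _ _ _); apply: eval_ext => -[i|[]] /=; rewrite free_lift_gen.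
Qed.

End GenericMalcev.

Theorem theorem3 (sg : signature) (Sigma : identities sg) (F G : global_op sg)
  (hF : is_global_op Sigma F) (hG : is_global_op Sigma G)
  (mF : monotone_op Sigma F) (mG : monotone_op Sigma G)
  (pF : hom_property Sigma F) (pG : hom_property Sigma G) :
  [<->
   (* (i) *)
   (exists t : term sg 'I_3, forall A : algebra sg, in_variety Sigma A ->
      malcev_mod (F A) (G A) t);
   (* (ii) *)
   (forall A : algebra sg, in_variety Sigma A ->
      exists t : term sg 'I_3, malcev_mod (F A) (G A) t);
   (* (iii) *)
   (exists t : term sg 'I_3, malcev_mod (F (Free Sigma 2)) (G (Free Sigma 2)) t);
   (* (iv) *)
   (let x := gen Sigma (@Ordinal 2 0 isT) in
    let y := gen Sigma (@Ordinal 2 1 isT) in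
    let S := gen_adm (fun a b => a = x /\ b = y) in
    exists t : term sg 'I_3,
      F (Free Sigma 2) S x (app3 t x y y) /\ G (Free Sigma 2) S (app3 t x x y) y);
   (* (v) *)
   (forall A : algebra sg, in_variety Sigma A -> forall R : rel_ A, adm R ->
      rsub (rcomp R R) (rcomp (F A R) (rcomp R (G A R))));
   (* (vi) *)
   (forall R : rel_ (Free Sigma 3), adm R ->
      rsub (rcomp R R) (rcomp (F _ R) (rcomp R (G _ R))));
   (* (vii) *)
   (let x := gen Sigma (@Ordinal 3 0 isT) in
    let y := gen Sigma (@Ordinal 3 1 isT) in
    let z := gen Sigma (@Ordinal 3 2 isT) in
    let S := gen_adm (fun a b => (a = x /\ b = y) \/ (a = y /\ b = z)) in
    rsub (rcomp S S) (rcomp (F _ S) (rcomp S (G _ S))));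
   (* (viii) *)
   (forall A : algebra sg, in_variety Sigma A -> forall R : rel_ A, adm R ->
      rsub R (rcomp (F A R) (rcomp (rconv R) (G A R))));
   (* (ix) *)
   (forall R : rel_ (Free Sigma 2), adm R ->
      rsub R (rcomp (F _ R) (rcomp (rconv R) (G _ R))));
   (* (x) *)
   (let x := gen Sigma (@Ordinal 2 0 isT) in
    let y := gen Sigma (@Ordinal 2 1 isT) in
    let S := gen_adm (fun a b => a = x /\ b = y) in
    rsub S (rcomp (F _ S) (rcomp (rconv S) (G _ S))))
  ].
Proof.
have varX2 := @in_variety_free sg Sigma 'I_2.
have varX3 := @in_variety_free sg Sigma 'I_3.
have generic_malcev_i := generic_malcev_malcev_mod mF mG pF pG.
tfae.
- by move=> [t malcev_t] A varA; exists t; apply: malcev_t.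
- by move=> malcev_all; apply: malcev_all _ varX2.
- move=> [t malcev_t] x y S; exists t.
  by apply: malcev_t; [apply: gen_adm_adm | apply: gen_adm_gen].
- move=> [t /generic_malcev_i malcev_t] A varA; exact: malcev_rcomp (malcev_t A varA).
- by move=> rcomp_all; apply: rcomp_all _ varX3.
- by move=> rcomp_X3 x y z S; apply/rcomp_X3/gen_adm_adm.
- move=> /(free3_rcomp_generic_malcev mF mG pF pG) [t /generic_malcev_i malcev_t] A varA.
  exact: malcev_rconv (malcev_t A varA).
- by move=> rconv_all; apply: rconv_all _ varX2.
- by move=> rconv_X2 x y S; apply/rconv_X2/gen_adm_adm.
- by move=> /free2_rconv_generic_malcev [t /generic_malcev_i malcev_t]; exists t.
Qed.
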